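(* Fix $1<p<\infty$. Fix natural numbers $l_1,\dots,l_d$, $0<\mu<1$, $\lambda,\Theta>0$, and $M>\lambda/\Theta$. Then for any $0<\eta_1<1$ there exists $0<\eta<\eta_1$ with the following property. Suppose $l_{d+1}$ is a natural number, $L=\prod_{i=1}^{d+1}l_i$, $T=\bigcup_{i=0}^{d+1}\Lambda_i$ is an $(l_1,\dots,l_{d+1})$ interval tree, and $(r_I)_{I\in T},(s_I)_{I\in T}$ are non-negative numbers such that (i) for each $I\in T$, $r_I\le\lambda s_I$; (ii) for each $I\in T\setminus\Lambda_{d+1}$, $r_I\le\sum_{J^-=I}r_J$ and $s_I\le\sum_{J^-=I}s_J$; (iii) for each $I\in\Lambda_d$, $r_I^p\le(1+\eta)\Theta^p l_{d+1}^{p-1}\sum_{J^-=I}s_J^p$; (iv) $r_{[L]}^p>(1-\eta)\Theta^p\bigl(\prod_{i=1}^{d+1}l_i^{p-1}\bigr)\sum_{I\in\Lambda_{d+1}}s_I^p$. Then for any $0\le j\le d$, $\max_{I\in\Lambda_j}s_I\le M\min_{I\in\Lambda_j}s_I$, and for any $0\le i<d$ and $I_1\in\Lambda_i$, $r_{I_1}^p>(1-\mu)l_{i+1}^{p-1}\sum_{J^-=I_1}r_J^p$.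
   Context: $[n]=\{1,\dots,n\}$. Given natural numbers $l_1,\dots,l_{k}$ with $L=\prod_{j=1}^{k}l_j$, an $(l_1,\dots,l_k)$ interval tree $T=\bigcup_{i=0}^k\Lambda_i$ is built as follows: $\Lambda_0=\{[L]\}$; if $\Lambda_i$ ($i<k$) consists of pairwise disjoint integer subintervals of $[L]$ each of cardinality $\prod_{j=i+1}^k l_j$, then each $I\in\Lambda_i$ is partitioned into $l_{i+1}$ integer subintervals of equal cardinality, and $\Lambda_{i+1}$ is the set of all these subintervals over all $I\in\Lambda_i$. For $0<j\le k$ and $J\in\Lambda_j$, $J^-$ denotes the unique $I\in\Lambda_{j-1}$ with $J\subset I$; sums $\sum_{J^-=I}$ range over the children of $I$. *)

From mathcomp Require Import all_boot all_order all_algebra.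
From mathcomp Require Import all_classical all_reals all_analysis.
Set Implicit Arguments. Unset Strict Implicit. Unset Printing Implicit Defensive.

(* An (l_1,...,l_n) interval tree is encoded through
   branching numbers [lt : nat -> nat] (only lt 1, ..., lt n matter).
   Level j (0 <= j <= n) consists of [tcnt lt j] = l_1*...*l_j intervals, each of
   cardinality [tsz lt n j] = l_{j+1}*...*l_n.  The k-th interval of level j
   (0 <= k < tcnt lt j) is the integer interval
   {k * tsz lt n j + 1, ..., (k+1) * tsz lt n j} of [L].
   Its children (J^- = I) are the intervals k * l_{j+1} + t, t < l_{j+1}, of level j+1.
   A family (x_I)_{I in T} indexed by intervals is given by a function
   x : nat -> nat -> R, x_I := x (start offset of I) (cardinality of I); so the
   value depends only on the interval as a set, as in the paper. *)

Definition text (l : nat -> nat) (d m : nat) : nat -> nat :=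
  fun i => if i == d.+1 then m else l i.

Definition tcnt (lt : nat -> nat) (j : nat) : nat := \prod_(1 <= i < j.+1) lt i.

Definition tsz (lt : nat -> nat) (n j : nat) : nat := \prod_(j.+1 <= i < n.+1) lt i.

Definition tnode {R : Type} (x : nat -> nat -> R) (lt : nat -> nat) (n j k : nat) : R :=
  x (k * tsz lt n j) (tsz lt n j).

From mathcomp Require Import all_boot all_order all_algebra.
From mathcomp Require Import all_classical all_reals all_analysis.
From mathcomp Require Import ring lra zify.
Set Implicit Arguments. Unset Strict Implicit. Unset Printing Implicit Defensive.
Import Order.TTheory GRing.Theory Num.Theory.
Local Open Scope ring_scope.

(* Write A_I := Theta^p (prod_{i > j} l_i^(p-1)) sum_{leaves J in I} s_J^p for I in
   Lambda_j; then A_I = l_{j+1}^(p-1) sum_{J^- = I} A_J.  The power-mean inequality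
   (sum_t x_t)^p <= n^(p-1) sum_t x_t^p together with (ii) propagates (iii) upwards to
   r_I^p <= (1 + eta) A_I on the levels j <= d, and the leaf values to
   Theta^p s_I^p <= A_I on all levels.  Since A_[L] = N^(p-1) sum_{I in Lambda_j} A_I
   with N = |Lambda_j|, hypothesis (iv) says that on every level j <= d the r_I are
   almost extremal for the power-mean inequality.  A quantitative form of the strict
   convexity of t |-> t^p (the defect (1 - e)^p - 1 + p e > 0) then forces every r_I^p,
   and hence every A_I, to lie within a factor 1 +- O(N tau) of the level average, where
   the small tau depends only on p, mu, lam / (M Theta) and l_1 ... l_d.
   Comparing Theta^p s_I1^p <= A_I1 with lam^p s_I2^p >= r_I2^p bounds s_I1 / s_I2, and
   comparing r_I^p with A_I = l_{j+1}^(p-1) sum_{J^- = I} A_J gives the second claim. *)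

Definition mean {R : numFieldType} (n : nat) (x : nat -> R) : R := (\sum_(t < n) x t) / n%:R.

Lemma mulr_mean {R : numFieldType} n (x : nat -> R) : (0 < n)%N ->
  n%:R * mean n x = \sum_(t < n) x t.
Proof. by move=> n_gt0; rewrite /mean mulrC divfK // pnatr_eq0 -lt0n. Qed.

Lemma mean_ge0 {R : numFieldType} n (x : nat -> R) :
  (forall t, (t < n)%N -> 0 <= x t) -> 0 <= mean n x.
Proof. by move=> x_ge0; apply: divr_ge0 => //; apply: sumr_ge0 => t _; apply: x_ge0. Qed.

Section PowerMean.
Variables (R : realType) (p : R).
Hypothesis p_gt1 : 1 < p.

Let p_gt0 : 0 < p. Proof. exact: lt_trans ltr01 p_gt1. Qed.

Lemma powR_tangent_le a x : 0 <= a -> 0 <= x ->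
  a `^ p + p * a `^ (p - 1) * (x - a) <= x `^ p.
Proof.
(* Young's inequality for x and a^(p-1) with the conjugate exponent q. *)
move=> a_ge0 x_ge0; pose q := p / (p - 1).
have p1_gt0 : 0 < p - 1 by rewrite subr_gt0.
have pq : p^-1 + q^-1 = 1.
  by rewrite invf_div -{1}(div1r p) -mulrDl subrKC mulfV ?gt_eqF.
have := conjugate_powR x_ge0 (powR_ge0 a (p - 1)) p_gt0 (divr_gt0 p_gt0 p1_gt0) pq.
rewrite -powRrM /q mulrCA mulfV ?gt_eqF // mulr1 invf_div -(mulr_powRB1 a_ge0 p_gt0).
set B := a `^ (p - 1); set X := x `^ p => young.
have : p * (x * B) <= X + a * B * (p - 1).
  have E : p * (X / p + a * B * ((p - 1) / p)) = X + a * B * (p - 1).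
    by field; rewrite gt_eqF.
  by rewrite -E ler_wpM2l // ltW.
lra.
Qed.

Lemma powRM_B1 c a : 0 <= c -> 0 <= a -> (c * a) `^ p = c `^ (p - 1) * (c * a `^ p).
Proof. by move=> c0 a0; rewrite powRM // -(mulr_powRB1 c0 p_gt0) mulrCA mulrA. Qed.

Definition powR_defect e := (1 - e) `^ p - 1 + p * e.

Lemma powR_defect_gt0 e : 0 < e < 1 -> 0 < powR_defect e.
Proof.
(* Chain the tangents at 1 and at c = 1 - e/2, whose slope p c^(p-1) is below p. *)
move=> /andP[e_gt0 e_lt1]; set c := 1 - e / 2.
have c_ge0 : 0 <= c by rewrite /c; lra.
have tangent_c := @powR_tangent_le c (1 - e) c_ge0 ltac:(lra).
have tangent_1 := @powR_tangent_le 1 c ler01 c_ge0.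
rewrite !powR1 in tangent_1.
have C_lt1 : c `^ (p - 1) < 1.
  have {2}-> : 1 = (1 : R) `^ (p - 1) by rewrite powR1.
  apply: gt0_ltr_powR; rewrite ?nnegrE ?subr_gt0 /c //; lra.
set C := c `^ (p - 1) in tangent_c C_lt1.
have : 0 < p * (e / 2) * (1 - C) by rewrite !mulr_gt0 // ?subr_gt0; lra.
rewrite /powR_defect /c in tangent_c tangent_1 *; nra.
Qed.

Lemma powR_tangent_defect_le a x e : 0 < a -> 0 < e < 1 -> 0 <= x -> x <= (1 - e) * a ->
  a `^ p + p * a `^ (p - 1) * (x - a) + powR_defect e * a `^ p <= x `^ p.
Proof.
move=> a_gt0 /andP[e_gt0 e_lt1] x_ge0 x_le; set c := (1 - e) * a.
have c_ge0 : 0 <= c by apply: mulr_ge0; lra.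
have tangent_c := powR_tangent_le c_ge0 x_ge0.
have cp : c `^ p = (1 - e) `^ p * a `^ p by rewrite powRM //; lra.
have slope : c `^ (p - 1) <= a `^ (p - 1).
  apply: ge0_ler_powR; rewrite ?nnegrE ?subr_ge0 ?ltW // /c; nra.
have : 0 <= p * ((a `^ (p - 1) - c `^ (p - 1)) * (c - x)).
  by rewrite mulr_ge0 ?(ltW p_gt0) // mulr_ge0 ?subr_ge0.
rewrite -(mulr_powRB1 (ltW a_gt0) p_gt0) -(mulr_powRB1 c_ge0 p_gt0) in cp tangent_c *.
rewrite /powR_defect; have ca : c = a - e * a by rewrite /c; ring.
rewrite ca in tangent_c cp *; lra.
Qed.

Lemma sum_tangent_at_mean n (x : nat -> R) : (0 < n)%N ->
  \sum_(t < n) (mean n x `^ p + p * mean n x `^ (p - 1) * (x t - mean n x)) =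
    n%:R * mean n x `^ p.
Proof.
move=> n_gt0; rewrite big_split /= -mulr_sumr sumrB !sumr_const !card_ord.
by rewrite -[mean n x *+ n]mulr_natl mulr_mean // subrr mulr0 addr0 mulr_natl.
Qed.

Lemma sum_powR_ge_mean n (x : nat -> R) : (0 < n)%N ->
  (forall t, (t < n)%N -> 0 <= x t) -> n%:R * mean n x `^ p <= \sum_(t < n) x t `^ p.
Proof.
move=> n_gt0 x_ge0; rewrite -sum_tangent_at_mean //; apply: ler_sum => t _.
by apply: powR_tangent_le; rewrite ?x_ge0 ?mean_ge0.
Qed.

Lemma power_mean n (x : nat -> R) : (forall t, (t < n)%N -> 0 <= x t) ->
  (\sum_(t < n) x t) `^ p <= n%:R `^ (p - 1) * \sum_(t < n) x t `^ p.
Proof.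
move=> x_ge0; case: (posnP n) => [->|n_gt0].
  by rewrite !big_ord0 powR0 ?mulr0 ?gt_eqF.
rewrite -mulr_mean // powRM_B1 ?mean_ge0 //; apply: ler_wpM2l; first exact: powR_ge0.
exact: sum_powR_ge_mean.
Qed.

Lemma power_mean_defect n k (x : nat -> R) e :
  (forall t, (t < n)%N -> 0 <= x t) -> (k < n)%N -> 0 < e < 1 ->
  0 < mean n x -> x k <= (1 - e) * mean n x ->
  (n%:R + powR_defect e) * mean n x `^ p <= \sum_(t < n) x t `^ p.
Proof.
move=> x_ge0 kn e01 mean_gt0 xk_small.
have n_gt0 : (0 < n)%N by apply: leq_ltn_trans kn.
rewrite mulrDl -sum_tangent_at_mean // (bigD1 (Ordinal kn)) //=.
rewrite [leRHS](bigD1 (Ordinal kn)) //= addrAC lerD //.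
  by apply: powR_tangent_defect_le => //; apply: x_ge0.
by apply: ler_sum => t _; apply: powR_tangent_le; rewrite ?x_ge0 ?ltW.
Qed.

End PowerMean.

Lemma ler_of_powR {R : realType} (p x y : R) : 0 < p -> 0 <= x -> 0 <= y ->
  x `^ p <= y `^ p -> x <= y.
Proof.
by move=> p_gt0 x_ge0 y_ge0; apply: contraTT; rewrite -!ltNge; apply: gt0_ltr_powR.
Qed.

Lemma mean_ub_of_lb {R : realFieldType} N (tau : R) (w : nat -> R) k :
  0 <= tau -> 0 <= mean N w -> (forall i, (i < N)%N -> (1 - tau) * mean N w <= w i) ->
  (k < N)%N -> w k <= (1 + N%:R * tau) * mean N w.
Proof.
move=> tau_ge0 mean_ge0 lb kN; set c := (1 - tau) * mean N w.
have : w k - c <= \sum_(i < N) (w i - c).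
  rewrite (bigD1 (Ordinal kN)) //= lerDl sumr_ge0 // => i _.
  by rewrite subr_ge0 lb.
have N_gt0 : (0 < N)%N by apply: leq_ltn_trans kN.
rewrite sumrB sumr_const card_ord -(mulr_mean _ N_gt0) -[c *+ N]mulr_natl /c.
have : 0 <= tau * mean N w by rewrite mulr_ge0.
nra.
Qed.

Lemma powR_mean_gt_of_sum {R : realType} (p eta : R) N (x w : nat -> R) :
  1 < p -> (0 < N)%N -> (forall k, (k < N)%N -> 0 <= x k) ->
  (1 - eta) * (N%:R `^ (p - 1) * \sum_(k < N) w k) < (\sum_(k < N) x k) `^ p ->
  (1 - eta) * mean N w < mean N x `^ p.
Proof.
move=> p_gt1 N_gt0 x_ge0; rewrite -!mulr_mean // powRM_B1 ?mean_ge0 //.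
by rewrite mulrCA ltr_pM2l ?powR_gt0 ?ltr0n // mulrCA ltr_pM2l ?ltr0n.
Qed.

Lemma power_mean_near_equality {R : realType} (p eta e : R) N (x w : nat -> R) k :
  1 < p -> 0 < e < 1 -> 0 < eta <= 1 / 8 -> 8 * eta * N%:R <= powR_defect p e ->
  (forall k, (k < N)%N -> 0 <= x k) ->
  (forall k, (k < N)%N -> x k `^ p <= (1 + eta) * w k) ->
  (1 - eta) * mean N w < mean N x `^ p -> (k < N)%N ->
  (1 - e) * mean N x < x k.
Proof.
move=> p_gt1 e01 /andP[eta_gt0 eta_le] eta_defect x_ge0 x_le_w mean_lt kN.
have N_gt0 : (0 < N)%N by apply: leq_ltn_trans kN.
have w_ge0 i : (i < N)%N -> 0 <= w i.
  by move=> iN; have := x_le_w i iN; have := powR_ge0 (x i) p; nra.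
have P_gt0 : 0 < mean N x `^ p.
  by apply: le_lt_trans mean_lt; rewrite mulr_ge0 ?mean_ge0 //; lra.
have mean_x_gt0 : 0 < mean N x.
  by apply: gt0_powR P_gt0; [exact: lt_trans p_gt1 | exact: mean_ge0].
rewrite ltNge; apply/negP => small.
have defect_gt0 := powR_defect_gt0 p_gt1 e01; set h := powR_defect p e in eta_defect defect_gt0.
have deficit := power_mean_defect p_gt1 x_ge0 kN e01 mean_x_gt0 small.
have sum_le : \sum_(i < N) x i `^ p <= (1 + eta) * (N%:R * mean N w).
  by rewrite mulr_mean // mulr_sumr; apply: ler_sum => i _; apply: x_le_w.
have : (1 - eta) * (N%:R + h) < (1 + eta) * N%:R.
  rewrite -(ltr_pM2r P_gt0) -mulrA.
  apply: le_lt_trans (_ : _ <= (1 - eta) * ((1 + eta) * (N%:R * mean N w))) _.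
    by rewrite ler_wpM2l ?(le_trans deficit) //; lra.
  have -> : (1 - eta) * ((1 + eta) * (N%:R * mean N w)) =
            (1 + eta) * N%:R * ((1 - eta) * mean N w) by ring.
  by rewrite ltr_pM2l // mulr_gt0 ?ltr0n //; lra.
have : 0 <= h * (1 / 8 - eta) by rewrite mulr_ge0 //; lra.
lra.
Qed.

Lemma level_balance {R : realType} (p eta tau e : R) K N (x w : nat -> R) :
  1 < p -> 0 < eta -> 4 * eta <= tau -> tau <= 1 / 2 -> 0 < e < 1 ->
  1 - tau / 2 <= (1 - e) `^ p -> 8 * eta * K%:R <= powR_defect p e ->
  (0 < N)%N -> (N <= K)%N ->
  (forall k, (k < N)%N -> 0 <= x k) ->
  (forall k, (k < N)%N -> x k `^ p <= (1 + eta) * w k) ->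
  (1 - eta) * (N%:R `^ (p - 1) * \sum_(k < N) w k) < (\sum_(k < N) x k) `^ p ->
  0 < mean N w /\ forall k, (k < N)%N ->
    (1 - tau) * mean N w <= x k `^ p /\ w k <= (1 + K%:R * tau) * mean N w.
Proof.
move=> p_gt1 eta_gt0 eta_tau tau_le e01 tau_e eta_defect N_gt0 N_le_K x_ge0 x_le_w sum_large.
have mean_lt := powR_mean_gt_of_sum p_gt1 N_gt0 x_ge0 sum_large.
have w_ge0 k : (k < N)%N -> 0 <= w k.
  by move=> kN; have := x_le_w k kN; have := powR_ge0 (x k) p; nra.
have mean_w_ge0 := mean_ge0 w_ge0.
have near k : (k < N)%N -> (1 - e) * mean N x < x k.
  apply: (power_mean_near_equality p_gt1 e01 _ _ x_ge0 x_le_w mean_lt).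
    by rewrite eta_gt0 /=; lra.
  by apply: le_trans eta_defect; rewrite ler_wpM2l ?ler_nat //; lra.
have x_lb k : (k < N)%N -> (1 - tau / 2) * (1 - eta) * mean N w <= x k `^ p.
  move=> kN; apply: le_trans (_ : (1 - e) `^ p * mean N x `^ p <= _).
    rewrite -mulrA; apply: ler_pM => //; [lra | | exact: ltW].
    by apply: mulr_ge0 => //; lra.
  have e_le1 : 0 <= 1 - e by case/andP: e01 => _; rewrite subr_ge0 => /ltW.
  rewrite -powRM ?mean_ge0 //; apply: ge0_ler_powR; rewrite ?nnegrE ?x_ge0 //.
  - by rewrite ltW // (lt_trans ltr01).
  - by rewrite mulr_ge0 ?mean_ge0.
  - exact/ltW/near.
have w_lb k : (k < N)%N -> (1 - tau) * mean N w <= w k.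
  move=> kN; rewrite -(ler_pM2l (_ : 0 < 1 + eta)); last by lra.
  apply: le_trans (x_le_w k kN); apply: le_trans (x_lb k kN); rewrite mulrA.
  by apply: ler_wpM2r => //; nra.
have w_ub k : (k < N)%N -> w k <= (1 + K%:R * tau) * mean N w.
  move=> kN; apply: le_trans (mean_ub_of_lb _ mean_w_ge0 w_lb kN) _; first lra.
  by rewrite ler_wpM2r // lerD2l ler_wpM2r ?ler_nat //; lra.
split.
  have w0_gt0 : 0 < w 0.
    have x0_gt0 : 0 < x 0.
      apply: le_lt_trans (near _ N_gt0); apply: mulr_ge0; [lra | exact: mean_ge0].
    have : 0 < x 0 `^ p by apply: powR_gt0.
    have := x_le_w 0 N_gt0; nra.
  have := w_ub 0 N_gt0; have : 0 <= K%:R * tau by apply: mulr_ge0 => //; lra.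
  nra.
move=> k kN; split; last exact: w_ub.
apply: le_trans (x_lb k kN); apply: ler_wpM2r => //; nra.
Qed.

Lemma sum_blocks {R : nmodType} (f : nat -> R) (c l : nat) :
  \sum_(k < (c * l)%N) f k = \sum_(k < c) \sum_(t < l) f (k * l + t)%N.
Proof.
elim: c => [|c IH]; first by rewrite mul0n !big_ord0.
rewrite big_ord_recr /= -IH mulSnr big_split_ord /=.
by congr (_ + _); apply: eq_bigr => i _.
Qed.

Section TreeCounts.
Variable b : nat -> nat.

Lemma tcnt0 : tcnt b 0 = 1%N.
Proof. by rewrite /tcnt big_geq. Qed.

Lemma tcntS j : tcnt b j.+1 = (tcnt b j * b j.+1)%N.
Proof. by rewrite /tcnt big_nat_recr. Qed.

Lemma tchild_lt j k t :
  (k < tcnt b j)%N -> (t < b j.+1)%N -> (k * b j.+1 + t < tcnt b j.+1)%N.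
Proof.
move=> kj tb; rewrite tcntS.
have : (k.+1 * b j.+1 <= tcnt b j * b j.+1)%N by rewrite leq_mul2r kj orbT.
rewrite mulSn; lia.
Qed.

Lemma tcnt_gt0 j : (forall i, (0 < i <= j)%N -> (0 < b i)%N) -> (0 < tcnt b j)%N.
Proof.
move=> b_gt0; rewrite /tcnt big_nat_cond prodn_cond_gt0 // => i /andP[/andP[i_gt0 ij] _].
by rewrite b_gt0 // i_gt0.
Qed.

Lemma leq_tcnt i j : (forall i, (0 < i <= j)%N -> (0 < b i)%N) -> (i <= j)%N ->
  (tcnt b i <= tcnt b j)%N.
Proof.
move=> b_gt0 ij; rewrite /tcnt [leqRHS](big_cat_nat (n := i.+1)) //=.
rewrite leq_pmulr // big_nat_cond prodn_cond_gt0 // => t /andP[/andP[it tj] _].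
by rewrite b_gt0 // (leq_ltn_trans _ it) //= -ltnS.
Qed.

Lemma sum_tcntS {R : nmodType} (f : nat -> R) j :
  \sum_(k < tcnt b j.+1) f k = \sum_(k < tcnt b j) \sum_(t < b j.+1) f (k * b j.+1 + t)%N.
Proof. by rewrite tcntS sum_blocks. Qed.

End TreeCounts.

Section TreeSums.
Variables (R : realType) (b : nat -> nat).

Lemma sum_level_ge_root n (F : nat -> nat -> R) :
  (forall j k, (j < n)%N -> (k < tcnt b j)%N ->
     F j k <= \sum_(t < b j.+1) F j.+1 (k * b j.+1 + t)) ->
  forall j, (j <= n)%N -> F 0 0 <= \sum_(k < tcnt b j) F j k.
Proof.
move=> F_sub; elim=> [|j IH] jn; first by rewrite tcnt0 big_ord1.
apply: le_trans (IH (ltnW jn)) _; rewrite sum_tcntS; apply: ler_sum => k _.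
exact: F_sub.
Qed.

Lemma root_eq_level (q : R) n (A : nat -> nat -> R) :
  (forall j k, (j < n)%N ->
     A j k = (b j.+1)%:R `^ q * \sum_(t < b j.+1) A j.+1 (k * b j.+1 + t)) ->
  forall j, (j <= n)%N -> A 0 0 = (tcnt b j)%:R `^ q * \sum_(k < tcnt b j) A j k.
Proof.
move=> A_rec; elim=> [|j IH] jn; first by rewrite tcnt0 big_ord1 powR1 mul1r.
rewrite IH ?(ltnW jn) // sum_tcntS tcntS natrM powRM // -mulrA; congr (_ * _).
by rewrite mulr_sumr; apply: eq_bigr => k _; rewrite A_rec.
Qed.

Lemma powR_le_weight (p C : R) n (F A : nat -> nat -> R) :
  1 < p -> 0 <= C ->
  (forall j k, (j <= n)%N -> (k < tcnt b j)%N -> 0 <= F j k) ->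
  (forall j k, (j < n)%N -> (k < tcnt b j)%N ->
     F j k <= \sum_(t < b j.+1) F j.+1 (k * b j.+1 + t)) ->
  (forall j k, (j < n)%N ->
     A j k = (b j.+1)%:R `^ (p - 1) * \sum_(t < b j.+1) A j.+1 (k * b j.+1 + t)) ->
  (forall k, (k < tcnt b n)%N -> F n k `^ p <= C * A n k) ->
  forall j k, (j <= n)%N -> (k < tcnt b j)%N -> F j k `^ p <= C * A j k.
Proof.
move=> p_gt1 C_ge0 F_ge0 F_sub A_rec F_leaf.
suff height i j k : (j + i)%N = n -> (k < tcnt b j)%N -> F j k `^ p <= C * A j k.
  by move=> j k jn; apply: (height (n - j)%N); rewrite subnKC.
elim: i j k => [|i IH] j k jin kj.
  by move: jin kj; rewrite addn0 => ->; apply: F_leaf.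
have jn : (j < n)%N by rewrite -jin -addSnnS leq_addr.
have child_ge0 t : (t < b j.+1)%N -> 0 <= F j.+1 (k * b j.+1 + t).
  by move=> tb; apply: F_ge0 => //; apply: tchild_lt.
rewrite A_rec //; apply: le_trans (_ : (\sum_(t < b j.+1) F j.+1 (k * b j.+1 + t)) `^ p <= _).
  apply: ge0_ler_powR; rewrite ?nnegrE; [lra | exact/F_ge0/kj/ltnW | | exact: F_sub].
  by apply: sumr_ge0 => t _; apply: child_ge0.
apply: le_trans (power_mean p_gt1 child_ge0) _.
rewrite mulrCA ler_wpM2l ?powR_ge0 // mulr_sumr ler_sum // => t _.
by apply: IH; [rewrite addSnnS | apply: tchild_lt].
Qed.

Definition tweight (n : nat) (q : R) (f : nat -> R) (j k : nat) : R :=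
  (\prod_(j.+1 <= i < n.+1) (b i)%:R `^ q) * \sum_(u < tsz b n j) f (k * tsz b n j + u)%N.

Lemma tweight_rec n q f j k : (j < n)%N ->
  tweight n q f j k =
    (b j.+1)%:R `^ q * \sum_(t < b j.+1) tweight n q f j.+1 (k * b j.+1 + t).
Proof.
move=> jn; have tsz_j : tsz b n j = (b j.+1 * tsz b n j.+1)%N by rewrite /tsz big_ltn.
rewrite /tweight big_ltn // tsz_j.
rewrite (sum_blocks (fun u => f (k * (b j.+1 * tsz b n j.+1) + u)%N)) -mulrA.
congr (_ * _).
rewrite mulr_sumr; apply: eq_bigr => t _; congr (_ * _); apply: eq_bigr => u _.
by congr f; ring.
Qed.

Lemma tweight_leaf n q f k : tweight n q f n k = f k.
Proof. by rewrite /tweight /tsz !big_geq // big_ord1 mul1r muln1 addn0. Qed.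

End TreeSums.

Lemma exists_tau {R : realType} (mu X Y : R) (K : nat) :
  0 < mu < 1 -> 0 <= Y -> Y < X ->
  exists tau : R, [/\ 0 < tau, tau <= 1 / 2, Y * (1 + K%:R * tau) <= X * (1 - tau) &
    (1 - mu) * (1 + tau) * (1 + K%:R * tau) < 1 - tau].
Proof.
move=> /andP[mu_gt0 mu_lt1] Y_ge0 YX; set k : R := K%:R + 1.
have K_ge0 : 0 <= K%:R :> R by [].
have k_gt0 : 0 < k by rewrite /k; lra.
set tau := Num.min (1 / 2) (Num.min ((X - Y) / (k * X)) (mu / (4 * k))).
have tau_gt0 : 0 < tau.
  by rewrite !lt_min !divr_gt0 ?mulr_gt0 //; lra.
have tau_XY : tau * (k * X) <= X - Y.
  by rewrite -ler_pdivlMr ?mulr_gt0 ?ge_min ?lexx ?orbT //; lra.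
have tau_mu : tau * (4 * k) <= mu.
  by rewrite -ler_pdivlMr ?mulr_gt0 ?ge_min ?lexx ?orbT //; lra.
have tau_le : tau <= 1 / 2 by rewrite ge_min lexx.
exists tau; split => //.
  have : K%:R * Y <= K%:R * X by rewrite ler_wpM2l //; lra.
  rewrite /k in tau_XY; nra.
have : K%:R * tau * tau <= K%:R * tau * 1 by rewrite ler_wpM2l ?mulr_ge0 //; lra.
have : 0 <= mu * (k * tau) by rewrite !mulr_ge0 //; lra.
rewrite /k in tau_mu *; nra.
Qed.

Lemma exists_eta {R : realType} (p tau eta1 : R) (K : nat) :
  1 < p -> 0 < tau -> tau <= 1 / 2 -> 0 < eta1 ->
  exists e eta : R, [/\ 0 < e < 1, 1 - tau / 2 <= (1 - e) `^ p, 0 < eta < eta1,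
    4 * eta <= tau & 8 * eta * K%:R <= powR_defect p e].
Proof.
move=> p_gt1 tau_gt0 tau_le eta1_gt0.
have p_gt0 : 0 < p by lra.
set e := tau / (2 * p).
have pe : p * e = tau / 2 by rewrite /e; field; rewrite gt_eqF.
have e01 : 0 < e < 1.
  have e_gt0 : 0 < e by rewrite divr_gt0 ?mulr_gt0 //; lra.
  have : 0 < (p - 1) * e by rewrite mulr_gt0 // subr_gt0.
  by rewrite e_gt0 /=; lra.
have tangent_1 : 1 - tau / 2 <= (1 - e) `^ p.
  have := @powR_tangent_le _ _ p_gt1 1 (1 - e) ler01 ltac:(lra).
  by rewrite !powR1 /= mulr1; lra.
have h_gt0 := powR_defect_gt0 p_gt1 e01; set h := powR_defect p e in h_gt0 *.
have K_ge0 : 0 <= K%:R :> R by [].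
set k : R := K%:R + 1; have k_gt0 : 0 < k by rewrite /k; lra.
pose eta := Num.min (eta1 / 2) (Num.min (tau / 4) (h / (8 * k))).
have eta_gt0 : 0 < eta by rewrite !lt_min !divr_gt0 ?mulr_gt0 //; lra.
have eta_lt : eta < eta1.
  have : eta <= eta1 / 2 by rewrite ge_min lexx.
  lra.
have eta_tau : 4 * eta <= tau.
  have : eta <= tau / 4 by rewrite !ge_min lexx !orbT.
  lra.
have eta_h : eta * (8 * k) <= h by rewrite -ler_pdivlMr ?mulr_gt0 // !ge_min lexx !orbT.
exists e, eta; split; rewrite ?eta_gt0 //.
have : eta * K%:R <= eta * k by rewrite ler_wpM2l ?ltW // /k; lra.
rewrite -/h; lra.
Qed.

Section TreeBalance.
Variables (R : realType) (p lam Theta M mu eta tau e : R) (b : nat -> nat) (d m K : nat).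
Variables (r s : nat -> nat -> R).
Let n := d.+1.
Hypotheses (p_gt1 : 1 < p) (lam_ge0 : 0 <= lam) (Theta_gt0 : 0 < Theta) (M_ge0 : 0 <= M).
Hypotheses (eta_gt0 : 0 < eta) (eta_tau : 4 * eta <= tau) (tau_le : tau <= 1 / 2)
  (e01 : 0 < e < 1) (tau_e : 1 - tau / 2 <= (1 - e) `^ p)
  (eta_defect : 8 * eta * K%:R <= powR_defect p e)
  (balance : lam `^ p * (1 + K%:R * tau) <= (M * Theta) `^ p * (1 - tau))
  (mu_le1 : mu <= 1) (concentration : (1 - mu) * (1 + tau) * (1 + K%:R * tau) < 1 - tau).
Hypotheses (b_gt0 : forall i, (0 < i <= n)%N -> (0 < b i)%N) (b_leaf : b n = m)
  (tcnt_le_K : forall j, (j <= d)%N -> (tcnt b j <= K)%N).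
Hypotheses
  (rs_ge0 : forall j k, (j <= n)%N -> (k < tcnt b j)%N -> 0 <= r j k /\ 0 <= s j k)
  (r_le_s : forall j k, (j <= n)%N -> (k < tcnt b j)%N -> r j k <= lam * s j k)
  (rs_sub : forall j k, (j < n)%N -> (k < tcnt b j)%N ->
     r j k <= \sum_(t < b j.+1) r j.+1 (k * b j.+1 + t) /\
     s j k <= \sum_(t < b j.+1) s j.+1 (k * b j.+1 + t))
  (r_last : forall k, (k < tcnt b d)%N ->
     r d k `^ p <= (1 + eta) * Theta `^ p * m%:R `^ (p - 1) *
                   \sum_(t < m) s n (k * m + t) `^ p)
  (r_root : (1 - eta) * Theta `^ p * (\prod_(1 <= i < n.+1) (b i)%:R `^ (p - 1)) *
              \sum_(k < tcnt b n) s n k `^ p < r 0 0 `^ p).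

(* [lra] ignores section hypotheses, hence the [have := _] preludes below. *)
Let tau_lt1 : 0 < 1 - tau. Proof. by have := tau_le; lra. Qed.

Let Ktau_ge0 : 0 <= 1 + K%:R * tau.
Proof. by rewrite addr_ge0 // mulr_ge0 //; have := eta_gt0; have := eta_tau; lra. Qed.

Let A := tweight b n (p - 1) (fun u => Theta `^ p * s n u `^ p).

Let A_rec j k : (j < n)%N ->
  A j k = (b j.+1)%:R `^ (p - 1) * \sum_(t < b j.+1) A j.+1 (k * b j.+1 + t).
Proof. exact: tweight_rec. Qed.

Let r_pow_le j k : (j <= d)%N -> (k < tcnt b j)%N -> r j k `^ p <= (1 + eta) * A j k.
Proof.
move: j k; apply: (powR_le_weight p_gt1) => [|i t id it|i t id it|i t id|t td].
- by rewrite addr_ge0 // ltW.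
- by case: (rs_ge0 (leqW id) it).
- by case: (rs_sub (ltnW id) it).
- exact/A_rec/ltnW.
rewrite A_rec // b_leaf; under eq_bigr do rewrite /A tweight_leaf.
apply: le_trans (r_last td) _.
by rewrite -mulr_sumr [_ * (Theta `^ p * _)]mulrCA !mulrA.
Qed.

Let s_pow_le j k : (j <= n)%N -> (k < tcnt b j)%N -> Theta `^ p * s j k `^ p <= A j k.
Proof.
have Tp_gt0 : 0 < Theta `^ p by apply: powR_gt0.
move=> jn kj; rewrite -ler_pdivlMl //; move: j k jn kj.
apply: (powR_le_weight p_gt1) => [|i t iN it|i t iN it|i t iN|t tN].
- by rewrite invr_ge0 ltW.
- by case: (rs_ge0 iN it).
- by case: (rs_sub iN it).
- exact: A_rec.
by rewrite /A tweight_leaf mulKf ?gt_eqF.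
Qed.

Let root_lt : (1 - eta) * A 0 0 < r 0 0 `^ p.
Proof.
suff -> : A 0 0 = Theta `^ p * (\prod_(1 <= i < n.+1) (b i)%:R `^ (p - 1)) *
                   \sum_(k < tcnt b n) s n k `^ p by rewrite !mulrA.
by rewrite /A /tweight (_ : tsz b n 0 = tcnt b n) // mul0n -mulr_sumr mulrCA mulrA.
Qed.

Let level j : (j <= d)%N ->
  0 < mean (tcnt b j) (A j) /\ forall k, (k < tcnt b j)%N ->
    (1 - tau) * mean (tcnt b j) (A j) <= r j k `^ p /\
    A j k <= (1 + K%:R * tau) * mean (tcnt b j) (A j).
Proof.
move=> jd; have jn : (j <= n)%N := leqW jd.
apply: (level_balance p_gt1 eta_gt0 eta_tau tau_le e01 tau_e eta_defect).
- apply: tcnt_gt0 => i /andP[i_gt0 ij]; apply: b_gt0; by rewrite i_gt0 (leq_trans ij jn).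
- exact: tcnt_le_K jd.
- by move=> k kj; case: (rs_ge0 jn kj).
- by move=> k kj; apply: r_pow_le.
rewrite -(root_eq_level A_rec jn); apply: (lt_le_trans root_lt).
apply: ge0_ler_powR; rewrite ?nnegrE.
- exact: ltW (lt_trans ltr01 p_gt1).
- by case: (rs_ge0 (leq0n n) (_ : 0 < tcnt b 0)%N); rewrite ?tcnt0.
- by apply: sumr_ge0 => k _; case: (rs_ge0 jn (ltn_ord k)).
by apply: sum_level_ge_root jn => i t iN it; case: (rs_sub iN it).
Qed.

Let s_balanced j : (j <= d)%N -> forall k1 k2, (k1 < tcnt b j)%N -> (k2 < tcnt b j)%N ->
  s j k1 <= M * s j k2.
Proof.
move=> jd k1 k2 k1j k2j; have jn : (j <= n)%N := leqW jd.
have [] := level jd; move: (mean _ _) => a a_gt0 bounds.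
have [[r2_ge0 s2_ge0] [_ s1_ge0]] := (rs_ge0 jn k2j, rs_ge0 jn k1j).
have p_gt0 : 0 < p := lt_trans ltr01 p_gt1.
have Tp_gt0 : 0 < Theta `^ p by apply: powR_gt0.
have r2_le : r j k2 `^ p <= lam `^ p * s j k2 `^ p.
  rewrite -powRM //; apply: ge0_ler_powR; rewrite ?nnegrE.
  - exact: ltW.
  - exact: r2_ge0.
  - exact: mulr_ge0.
  - exact: r_le_s jn k2j.
apply: ler_of_powR p_gt0 s1_ge0 (mulr_ge0 M_ge0 s2_ge0) _.
rewrite -(ler_pM2l tau_lt1) -(ler_pM2l Tp_gt0) mulrCA [leRHS]mulrCA.
apply: le_trans (_ : _ <= (1 - tau) * ((1 + K%:R * tau) * a)) _.
  by apply: ler_wpM2l; [exact: ltW | exact: le_trans (s_pow_le jn k1j) (bounds k1 k1j).2].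
rewrite [leLHS]mulrCA.
apply: le_trans (_ : _ <= (1 + K%:R * tau) * (lam `^ p * s j k2 `^ p)) _.
  by apply: ler_wpM2l => //; apply: le_trans (bounds k2 k2j).1 r2_le.
have := ler_wpM2r (powR_ge0 (s j k2) p) balance.
rewrite !powRM ?(ltW Theta_gt0) //; lra.
Qed.

Let r_concentrated i k : (i < d)%N -> (k < tcnt b i)%N ->
  (1 - mu) * (b i.+1)%:R `^ (p - 1) * \sum_(t < b i.+1) r i.+1 (k * b i.+1 + t) `^ p <
  r i k `^ p.
Proof.
move=> id ki; have [] := level (ltnW id); move: (mean _ _) => a a_gt0 bounds.
have [r_lb A_ub] := bounds k ki.
have children : (b i.+1)%:R `^ (p - 1) * \sum_(t < b i.+1) r i.+1 (k * b i.+1 + t) `^ p <=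
                (1 + eta) * A i k.
  rewrite A_rec ?(ltn_trans id) // mulrCA; apply: ler_wpM2l; first exact: powR_ge0.
  by rewrite mulr_sumr; apply: ler_sum => t _; apply: r_pow_le id (tchild_lt ki _).
have mu_ge0 : 0 <= 1 - mu by have := mu_le1; lra.
have eta_le : 1 + eta <= 1 + tau by have := eta_gt0; have := eta_tau; lra.
apply: lt_le_trans r_lb; rewrite -mulrA.
apply: le_lt_trans (_ : _ <= (1 - mu) * ((1 + eta) * ((1 + K%:R * tau) * a))) _.
  apply: ler_wpM2l => //; apply: le_trans children _.
  by apply: ler_wpM2l => //; have := eta_gt0; lra.
rewrite !mulrA ltr_pM2r //; apply: le_lt_trans concentration.
by apply: ler_wpM2r => //; apply: ler_wpM2l.
Qed.

Lemma tree_balance :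
  (forall j, (j <= d)%N -> forall k1 k2, (k1 < tcnt b j)%N -> (k2 < tcnt b j)%N ->
     s j k1 <= M * s j k2) /\
  (forall i k, (i < d)%N -> (k < tcnt b i)%N ->
     (1 - mu) * (b i.+1)%:R `^ (p - 1) * \sum_(t < b i.+1) r i.+1 (k * b i.+1 + t) `^ p <
     r i k `^ p).
Proof. by split; [exact: s_balanced | exact: r_concentrated]. Qed.

End TreeBalance.

Lemma tcnt_text (l : nat -> nat) d m j : (j <= d)%N -> tcnt (text l d m) j = tcnt l j.
Proof.
move=> jd; apply: eq_big_nat => i /andP[_ ij].
by rewrite /text ltn_eqF // (leq_trans ij).
Qed.

Lemma text_gt0 (l : nat -> nat) d m :
  (forall i, (0 < i <= d)%N -> (0 < l i)%N) -> (0 < m)%N ->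
  forall i, (0 < i <= d.+1)%N -> (0 < text l d m i)%N.
Proof.
move=> l_gt0 m_gt0 i /andP[i_gt0 id]; rewrite /text.
by case: eqP => // /eqP i_ne; apply: l_gt0; rewrite i_gt0 -ltnS ltn_neqAle i_ne.
Qed.

Theorem lemma3p4 (R : realType) (p : R) (d : nat) (l : nat -> nat)
    (mu lam Theta M : R) :
  1 < p ->
  (forall i : nat, (1 <= i <= d)%N -> (0 < l i)%N) ->
  0 < mu < 1 -> 0 < lam -> 0 < Theta -> lam / Theta < M ->
  forall eta1 : R, 0 < eta1 < 1 ->
  exists eta : R, 0 < eta < eta1 /\
  forall (m : nat) (r s : nat -> nat -> R),
    (0 < m)%N ->
    let lt := text l d m in
    let n := d.+1 in
    (* non-negativity on T *)
    (forall j k : nat, (j <= n)%N -> (k < tcnt lt j)%N ->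
       0 <= tnode r lt n j k /\ 0 <= tnode s lt n j k) ->
    (* (i) *)
    (forall j k : nat, (j <= n)%N -> (k < tcnt lt j)%N ->
       tnode r lt n j k <= lam * tnode s lt n j k) ->
    (* (ii) *)
    (forall j k : nat, (j < n)%N -> (k < tcnt lt j)%N ->
       tnode r lt n j k <= \sum_(t < lt j.+1) tnode r lt n j.+1 (k * lt j.+1 + t) /\
       tnode s lt n j k <= \sum_(t < lt j.+1) tnode s lt n j.+1 (k * lt j.+1 + t)) ->
    (* (iii) *)
    (forall k : nat, (k < tcnt lt d)%N ->
       tnode r lt n d k `^ p <=
         (1 + eta) * Theta `^ p * (m%:R) `^ (p - 1) *
         \sum_(t < m) tnode s lt n n (k * m + t) `^ p) ->
    (* (iv) *)
    (1 - eta) * Theta `^ p * (\prod_(1 <= i < n.+1) (lt i)%:R `^ (p - 1)) *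
       \sum_(k < tcnt lt n) tnode s lt n n k `^ p
      < tnode r lt n 0 0 `^ p ->
    (* conclusions *)
    (forall j : nat, (j <= d)%N ->
       forall k1 k2 : nat, (k1 < tcnt lt j)%N -> (k2 < tcnt lt j)%N ->
         tnode s lt n j k1 <= M * tnode s lt n j k2) /\
    (forall i k : nat, (i < d)%N -> (k < tcnt lt i)%N ->
       (1 - mu) * (lt i.+1)%:R `^ (p - 1) *
         \sum_(t < lt i.+1) tnode r lt n i.+1 (k * lt i.+1 + t) `^ p
       < tnode r lt n i k `^ p).
Proof.
move=> p_gt1 l_gt0 mu01 lam_gt0 Theta_gt0 lam_lt eta1 /andP[eta1_gt0 _].
have M_gt0 : 0 < M by apply: lt_trans lam_lt; rewrite divr_gt0.
have lamp_lt : lam `^ p < (M * Theta) `^ p.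
  apply: gt0_ltr_powR; rewrite ?nnegrE.
  - exact: lt_trans p_gt1.
  - exact: ltW.
  - by rewrite mulr_ge0 // ltW.
  - by rewrite -ltr_pdivrMr.
have [tau [tau_gt0 tau_le balance concentration]] :=
  exists_tau (tcnt l d) mu01 (powR_ge0 lam p) lamp_lt.
have [e [eta [e01 tau_e /andP[eta_gt0 eta_lt] eta_tau eta_defect]]] :=
  exists_eta (tcnt l d) p_gt1 tau_gt0 tau_le eta1_gt0.
exists eta; split=> [|m r s m_gt0 lt n rs_ge0 r_le_s rs_sub r_last r_root].
  by rewrite eta_gt0.
apply: (tree_balance (m := m) p_gt1 (ltW lam_gt0) Theta_gt0 (ltW M_gt0) eta_gt0 eta_tau tau_le
  e01 tau_e eta_defect balance _ concentration) => //.
- by case/andP: mu01 => _ /ltW.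
- exact: text_gt0.
- by rewrite /lt /text eqxx.
- by move=> j jd; rewrite tcnt_text // leq_tcnt.
Qed.
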